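(* Let $\mathcal{M}=(M_i\colon i\in K)$ be a family of matroids on a common ground set $E$. Let $(I_i\colon i\in K)$ be a family of pairwise disjoint sets such that $I_i$ is independent in $M_i$ for all $i\in K$, and let $e\in E\setminus\bigcup_{i\in K}I_i$. Then exactly one of the following two statements holds. (1) There are a family of sets $(J_i\colon i\in K)$ and $k\in K$ such that: (a) $J_i$ is independent in $M_i$ for all $i$; (b) $J_i\cap J_j=\emptyset$ for $i\neq j$; (c) $\bigcup_{i\in K}J_i=\bigcup_{i\in K}I_i\cup\{e\}$; (d) $\sum_{i\in K}|I_i\triangle J_i|<\aleph_0$; (e) $\mathrm{span}_{M_i}(J_i)=\mathrm{span}_{M_i}(I_i)$ for all $i\neq k$, and $\mathrm{span}_{M_k}(J_k\setminus\{f\})=\mathrm{span}_{M_k}(I_k)$ for some $f\in J_k$. (2) There exists $X\subseteq\bigcup_{i\in K}I_i$ such that for every $i\in K$ the set $I_i\cap X$ spans $X\cup\{e\}$ in $M_i$.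
   Context: Matroids here are possibly infinite: a matroid is a pair $(E,\mathcal{I})$ with $\mathcal{I}\subseteq\mathcal{P}(E)$ such that (1) $\emptyset\in\mathcal{I}$; (2) $\mathcal{I}$ is closed under subsets; (3) for all $I,B\in\mathcal{I}$ with $B$ maximal in $\mathcal{I}$ and $I$ not maximal, there is $x\in B\setminus I$ with $I\cup\{x\}\in\mathcal{I}$; (4) for every $X\subseteq E$, every $I\in\mathcal{I}$ with $I\subseteq X$ extends to a maximal element of $\mathcal{I}\cap\mathcal{P}(X)$. Circuits are minimal dependent sets. A set $X$ spans $e$ in $M$ if $e\in X$ or there is a circuit $C\ni e$ with $C\setminus\{e\}\subseteq X$; $\mathrm{span}_M(X)$ is the set of elements spanned by $X$, and $X$ spans a set $Y$ if $Y\subseteq\mathrm{span}_M(X)$. *)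

(* sets are predicates E -> Prop. The ground set of a matroid
   on the type E is the whole type E. *)
From Stdlib Require Import List.

Definition subset {E : Type} (A B : E -> Prop) : Prop := forall x, A x -> B x.
Definition set_eq {E : Type} (A B : E -> Prop) : Prop := forall x, A x <-> B x.
Definition setU1 {E : Type} (A : E -> Prop) (y : E) : E -> Prop :=
  fun x => A x \/ x = y.
Definition setD1 {E : Type} (A : E -> Prop) (y : E) : E -> Prop :=
  fun x => A x /\ x <> y.

Definition maximal {E : Type} (P : (E -> Prop) -> Prop) (B : E -> Prop) : Prop :=
  P B /\ forall J, P J -> subset B J -> subset J B.

Record matroid (E : Type) := Matroid {
  indep : (E -> Prop) -> Prop;
  indep_empty : indep (fun _ => False);
  indep_sub : forall A B, indep B -> subset A B -> indep A;
  indep_aug : forall I B, indep I -> maximal indep B -> ~ maximal indep I ->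
      exists x, B x /\ ~ I x /\ indep (setU1 I x);
  indep_max : forall (X I : E -> Prop), indep I -> subset I X ->
      exists B, subset I B /\ maximal (fun J => indep J /\ subset J X) B
}.
Arguments indep {E} m _.

Definition circuit {E : Type} (M : matroid E) (C : E -> Prop) : Prop :=
  ~ indep M C /\ forall D, subset D C -> ~ indep M D -> subset C D.

Definition spans_elt {E : Type} (M : matroid E) (X : E -> Prop) (e : E) : Prop :=
  X e \/ exists C, circuit M C /\ C e /\ subset (setD1 C e) X.

Definition span {E : Type} (M : matroid E) (X : E -> Prop) : E -> Prop :=
  fun e => spans_elt M X e.

Definition spans {E : Type} (M : matroid E) (X Y : E -> Prop) : Prop :=
  subset Y (span M X).

Definition bigU {K E : Type} (I : K -> E -> Prop) : E -> Prop :=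
  fun x => exists i, I i x.

Definition symdiff {E : Type} (A B : E -> Prop) : E -> Prop :=
  fun x => (A x /\ ~ B x) \/ (B x /\ ~ A x).

(* sum_{i in K} |I_i triangle J_i| < aleph_0 : the disjoint union of the
   symmetric differences is finite *)
Definition finite_sum_symdiff {K E : Type} (I J : K -> E -> Prop) : Prop :=
  exists l : list (K * E), forall i x, symdiff (I i) (J i) x -> In (i, x) l.

From Stdlib Require Import List Classical ClassicalEpsilon Arith Lia.

(* Consider the exchange graph of the packing: an arc x -> y labelled i whenever
   I_i + x is dependent in M_i, y is in I_i and I_i - y + x is independent.
   If some element that can be added to some I_k is reachable from e, take a
   shortest such path.  Performing its first exchange preserves every span, and
   by minimality the rest of the path is still an augmenting path for the new
   packing, so induction on the length gives (1).  Otherwise the covered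
   elements reachable from e form a set X with X + e spanned by every I_i ∩ X,
   which is (2).  The alternatives exclude each other: the disjoint sets I_i ∩ X
   span X + e, and each element of X + e not yet covered can be exchanged, along
   its fundamental circuit, against an element outside the corresponding J_i;
   as J differs from I in finitely many places, this eventually covers e. *)

Section Matroid.
Context {E : Type} (M : matroid E).

Definition base (B : E -> Prop) : Prop := maximal (indep M) B.

Definition fund_circuit (A : E -> Prop) (x : E) (C : E -> Prop) : Prop :=
  circuit M C /\ C x /\ subset (setD1 C x) A.

Lemma circuit_sub_dep C D : circuit M C -> subset C D -> ~ indep M D.
Proof. intros [HC _] HCD HD. exact (HC (indep_sub _ M C D HD HCD)). Qed.

Lemma circuit_setD1_indep C y : circuit M C -> C y -> indep M (setD1 C y).
Proof.
  intros [_ Hmin] Hy. apply NNPP; intro Hdep.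
  destruct (Hmin _ (fun z hz => proj1 hz) Hdep y Hy) as [_ Hyy]. exact (Hyy eq_refl).
Qed.

Lemma base_extend A : indep M A -> exists B, base B /\ subset A B.
Proof.
  intros HA.
  destruct (indep_max _ M (fun _ => True) A HA (fun _ _ => Logic.I)) as [B [HAB [[HB _] HBmax]]].
  exists B. split; [split; [exact HB |] | exact HAB].
  intros J HJ HBJ. exact (HBmax J (conj HJ (fun _ _ => Logic.I)) HBJ).
Qed.

Lemma base_extend_within A B : indep M A -> base B ->
  exists B', base B' /\ subset A B' /\ subset B' (fun x => A x \/ B x).
Proof.
  intros HA HB.
  destruct (indep_max _ M (fun x => A x \/ B x) A HA (fun x h => or_introl h))
    as [B' [HAB' [[HB' HB'AB] HB'max]]].
  exists B'. split; [| split; assumption].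
  split; [exact HB' |]. apply NNPP; intro Hnmax.
  assert (Hnbase : ~ base B').
  { intros [_ Hmax]. exact (Hnmax Hmax). }
  destruct (indep_aug _ M B' B HB' HB Hnbase) as [x [HBx [HB'x Hind]]].
  apply HB'x, (HB'max (setU1 B' x)).
  - split; [exact Hind |]. intros z [hz | ->]; [exact (HB'AB z hz) | right; exact HBx].
  - intros z hz; left; exact hz.
  - right; reflexivity.
Qed.

Lemma base_exchange B B' x y : base B -> base B' -> subset B' (setU1 B x) ->
  B y -> ~ B' y -> indep M (setU1 (setD1 B y) x).
Proof.
  intros [HB HBmax] HB' HB'Bx Hy HB'y.
  assert (Hnbase : ~ base (setD1 B y)).
  { intros [_ Hmax]. destruct (Hmax B HB (fun z hz => proj1 hz) y Hy) as [_ Hyy].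
    exact (Hyy eq_refl). }
  destruct (indep_aug _ M (setD1 B y) B' (indep_sub _ M _ _ HB (fun z hz => proj1 hz))
    HB' Hnbase) as [w [HB'w [Hw Hind]]].
  destruct (HB'Bx w HB'w) as [HBw | ->]; [| exact Hind].
  exfalso. apply Hw. split; [exact HBw |]. intros ->. exact (HB'y HB'w).
Qed.

Lemma fund_circuit_sub_setU1 A x C : fund_circuit A x C -> subset C (setU1 A x).
Proof.
  intros [_ [_ HCA]] z hz.
  destruct (classic (z = x)) as [-> | hzx];
      [right; reflexivity | left; apply HCA; split; assumption].
Qed.

Lemma fund_circuit_mono A A' x C : subset A A' -> fund_circuit A x C -> fund_circuit A' x C.
Proof.
  intros HAA' [HC [Hx HCA]]. split; [exact HC | split; [exact Hx |]].
  intros z hz. exact (HAA' z (HCA z hz)).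
Qed.

Lemma setU1_dep_notin A x : indep M A -> ~ indep M (setU1 A x) -> ~ A x.
Proof. intros HA Hdep Hx. apply Hdep, (indep_sub _ M _ A HA). intros z [hz | ->]; assumption. Qed.

Lemma fund_circuit_dep A x C : fund_circuit A x C -> ~ indep M (setU1 A x).
Proof. intros HfC. exact (circuit_sub_dep C _ (proj1 HfC) (fund_circuit_sub_setU1 A x C HfC)). Qed.

Lemma fund_circuit_notin A x C : indep M A -> fund_circuit A x C -> ~ A x.
Proof. intros HA HfC. exact (setU1_dep_notin A x HA (fund_circuit_dep A x C HfC)). Qed.

Lemma circuit_exchange_base B C x y : base B -> fund_circuit B x C -> C y -> y <> x ->
  indep M (setU1 (setD1 B y) x).
Proof.
  intros HB HfC Hy Hyx.
  pose proof HfC as [HC [Hx HCB]].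
  destruct (base_extend_within (setD1 C y) B (circuit_setD1_indep C y HC Hy) HB)
    as [B' [HB' [HCB' HB'sub]]].
  apply (base_exchange B B' x y HB HB').
  - intros z hz. destruct (HB'sub z hz) as [hCz | hBz]; [| left; exact hBz].
    exact (fund_circuit_sub_setU1 B x C HfC z (proj1 hCz)).
  - apply HCB; split; assumption.
  - intros HB'y. apply (circuit_sub_dep C B' HC); [| exact (proj1 HB')].
    intros z hz. destruct (classic (z = y)) as [-> | hzy];
        [exact HB'y | apply HCB'; split; assumption].
Qed.

Lemma circuit_exchange A C x y : indep M A -> fund_circuit A x C -> C y -> y <> x ->
  indep M (setU1 (setD1 A y) x).
Proof.
  intros HA HfC Hy Hyx.
  destruct (base_extend A HA) as [B [HB HAB]].
  apply (indep_sub _ M _ _ (circuit_exchange_base B C x y HB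
      (fund_circuit_mono A B x C HAB HfC) Hy Hyx)).
  intros z [[hz hzy] | ->]; [left; split; [apply HAB |]; assumption | right; reflexivity].
Qed.

Lemma fund_circuit_exists A x : indep M A -> ~ indep M (setU1 A x) -> exists C, fund_circuit A x C.
Proof.
  intros HA Hdep.
  destruct (base_extend A HA) as [B [HB HAB]].
  set (C := fun c => c = x \/ (B c /\ indep M (setU1 (setD1 B c) x))).
  assert (HCB : forall c, C c -> c <> x -> B c).
  { intros c [-> | [hc _]] hcx; [contradiction | exact hc]. }
  exists C. split; [split | split; [left; reflexivity |]].
  - intros HC.
    destruct (base_extend_within C B HC HB) as [B' [HB' [HCB' HB'sub]]].
    assert (HB'Bx : subset B' (setU1 B x)).
    { intros z hz. destruct (HB'sub z hz) as [[-> | [hz' _]] | hz']; [right | left | left]; auto. }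
    destruct (classic (exists y, B y /\ ~ B' y)) as [[y [Hy HB'y]] | Hall].
    + apply HB'y, HCB'. right. split; [exact Hy |].
      exact (base_exchange B B' x y HB HB' HB'Bx Hy HB'y).
    + apply Hdep, (indep_sub _ M _ B' (proj1 HB')). intros z [hz | ->].
      * apply NNPP; intros HB'z. apply Hall. exists z. split; [apply HAB |]; assumption.
      * apply HCB'. left; reflexivity.
  - intros D HDC HD c hc. apply NNPP; intros HDc. apply HD.
    destruct hc as [-> | [hc Hind]].
    + apply (indep_sub _ M D B (proj1 HB)). intros z hz.
      apply HCB; [exact (HDC z hz) |]. intros ->. exact (HDc hz).
    + apply (indep_sub _ M D _ Hind). intros z hz.
      destruct (classic (z = x)) as [-> | hzx]; [right; reflexivity |].
      left. split; [exact (HCB z (HDC z hz) hzx) |]. intros ->. exact (HDc hz).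
  - intros c [hc hcx]. apply NNPP; intros HAc. apply Hdep.
    destruct hc as [-> | [_ Hind]]; [contradiction |].
    apply (indep_sub _ M _ _ Hind). intros z [hz | ->]; [| right; reflexivity].
    left. split; [apply HAB; exact hz |]. intros ->. exact (HAc hz).
Qed.

Lemma span_indepE A x : indep M A -> (span M A x <-> A x \/ ~ indep M (setU1 A x)).
Proof.
  intros HA. split.
  - intros [hx | [C HfC]]; [left; exact hx | right; exact (fund_circuit_dep A x C HfC)].
  - intros [hx | Hdep]; [left; exact hx | right; exact (fund_circuit_exists A x HA Hdep)].
Qed.

Lemma indep_setU1E A x : indep M A -> ~ A x -> (indep M (setU1 A x) <-> ~ span M A x).
Proof.
  intros HA HAx. rewrite (span_indepE A x HA).
  split; [intros Hind [hx | Hdep]; contradiction | intros Hnspan; apply NNPP; auto].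
Qed.

Lemma span_mono A B : subset A B -> forall w, span M A w -> span M B w.
Proof.
  intros HAB w [hw | [C [HC [Hw HCA]]]]; [left; exact (HAB w hw) |].
  right. exists C. split; [exact HC | split; [exact Hw |]]. intros z hz; exact (HAB z (HCA z hz)).
Qed.

Lemma fund_circuit_unique_sub A x C1 C2 : indep M A ->
  fund_circuit A x C1 -> fund_circuit A x C2 -> subset C1 C2.
Proof.
  intros HA HfC1 HfC2 y hy.
  destruct (classic (y = x)) as [-> | hyx]; [exact (proj1 (proj2 HfC2)) |].
  apply NNPP; intros HC2y.
  apply (circuit_sub_dep C2 (setU1 (setD1 A y) x) (proj1 HfC2));
      [| exact (circuit_exchange A C1 x y HA HfC1 hy hyx)].
  intros z hz. destruct (fund_circuit_sub_setU1 A x C2 HfC2 z hz) as [hAz | ->];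
      [| right; reflexivity].
  left. split; [exact hAz |]. intros ->. exact (HC2y hz).
Qed.

Lemma fund_circuit_exchange A C x y : fund_circuit A x C -> C y ->
  fund_circuit (setU1 (setD1 A y) x) y C.
Proof.
  intros [HC [Hx HCA]] Hy. split; [exact HC | split; [exact Hy |]].
  intros z [hz hzy]. destruct (classic (z = x)) as [-> | hzx]; [right; reflexivity |].
  left. split; [apply HCA; split |]; assumption.
Qed.

Lemma span_exchange_sub A C x y : indep M A -> fund_circuit A x C -> C y -> y <> x ->
  forall w, span M A w -> span M (setU1 (setD1 A y) x) w.
Proof.
  intros HA HfC Hy Hyx w Hw.
  set (A' := setU1 (setD1 A y) x).
  assert (HA' : indep M A') by exact (circuit_exchange A C x y HA HfC Hy Hyx).
  assert (HfC' : fund_circuit A' y C) by exact (fund_circuit_exchange A C x y HfC Hy).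
  assert (HAx : ~ A x) by exact (fund_circuit_notin A x C HA HfC).
  apply (span_indepE A' w HA').
  destruct (classic (A' w)) as [HA'w | HA'w]; [left; exact HA'w | right].
  destruct (classic (w = y)) as [-> | hwy]; [exact (fund_circuit_dep A' y C HfC') |].
  assert (HAw : ~ A w).
  { intros hw. apply HA'w. left. split; assumption. }
  assert (HAwdep : ~ indep M (setU1 A w)).
  { destruct (proj1 (span_indepE A w HA) Hw) as [hw | Hdep]; [contradiction | exact Hdep]. }
  intros Hind. destruct (base_extend _ Hind) as [T [HT HA'T]].
  (* exchanging back y for x inside a base through A' + w puts A + w in an independent set *)
  assert (HfCT : fund_circuit T y C) by (apply (fund_circuit_mono A');
      [intros z hz; apply HA'T; left |]; assumption).
  apply HAwdep, (indep_sub _ M _ _ (circuit_exchange_base T C y x HT HfCT (proj1 (proj2 HfC))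
      (not_eq_sym Hyx))).
  intros z [hz | ->].
  - destruct (classic (z = y)) as [-> | hzy]; [right; reflexivity |].
    left. split; [apply HA'T; left; left; split |]; [assumption .. | intros ->; contradiction].
  - left. split; [apply HA'T; right; reflexivity |]. intros ->. apply HA'w. right; reflexivity.
Qed.

Lemma span_exchange A C x y : indep M A -> fund_circuit A x C -> C y -> y <> x ->
  forall w, span M (setU1 (setD1 A y) x) w <-> span M A w.
Proof.
  intros HA HfC Hy Hyx w. split; [| exact (span_exchange_sub A C x y HA HfC Hy Hyx w)].
  intros Hw.
  assert (HAy : A y) by (apply (proj2 (proj2 HfC)); split; assumption).
  apply (span_mono (setU1 (setD1 (setU1 (setD1 A y) x) x) y)).
  - intros z [[[[hz _] | ->] hzx] | ->]; [exact hz | contradiction | exact HAy].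
  - apply (span_exchange_sub _ C y x); [exact (circuit_exchange A C x y HA HfC Hy Hyx)
      | exact (fund_circuit_exchange A C x y HfC Hy) | exact (proj1 (proj2 HfC))
          | exact (not_eq_sym Hyx) | exact Hw].
Qed.

Lemma span_swap A a b : indep M A -> ~ indep M (setU1 A a) -> A b ->
  indep M (setU1 (setD1 A b) a) -> forall w, span M (setU1 (setD1 A b) a) w <-> span M A w.
Proof.
  intros HA Hdep Hb Hind.
  destruct (fund_circuit_exists A a HA Hdep) as [C HfC].
  assert (HCb : C b).
  { apply NNPP; intros HCb. apply (circuit_sub_dep C (setU1 (setD1 A b) a) (proj1 HfC));
      [| exact Hind].
    intros z hz. destruct (fund_circuit_sub_setU1 A a C HfC z hz) as [hAz | ->];
        [| right; reflexivity].
    left. split; [exact hAz |]. intros ->. exact (HCb hz). }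
  apply (span_exchange A C a b HA HfC HCb).
  intros Hba. subst b. exact (setU1_dep_notin A a HA Hdep Hb).
Qed.

(* In exchange-graph terms: if a -> b and c -> d are arcs for A but a -> d is not,
   then c -> d is still an arc after exchanging b for a. *)
Lemma double_exchange_indep A a b c d : indep M A ->
  ~ indep M (setU1 A a) -> A b -> indep M (setU1 (setD1 A b) a) ->
  c <> a -> ~ indep M (setU1 A c) -> A d -> indep M (setU1 (setD1 A d) c) ->
  ~ indep M (setU1 (setD1 A d) a) -> indep M (setU1 (setD1 (setU1 (setD1 A b) a) d) c).
Proof.
  intros HA Hadep Hb Hba Hca Hcdep Hd Hdc Hda.
  set (A' := setU1 (setD1 A b) a).
  assert (HAc : ~ A c) by exact (setU1_dep_notin A c HA Hcdep).
  assert (HA'c : ~ A' c) by (intros [[hc _] | hc]; contradiction).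
  assert (HA'cdep : ~ indep M (setU1 A' c)).
  { rewrite (indep_setU1E A' c Hba HA'c). intros Hnspan. apply Hnspan.
    apply (span_swap A a b HA Hadep Hb Hba c), (span_indepE A c HA). right; exact Hcdep. }
  destruct (fund_circuit_exists A' c Hba HA'cdep) as [C HfC].
  destruct (classic (C d)) as [HCd | HCd].
  { apply (circuit_exchange A' C c d Hba HfC HCd). intros ->. contradiction. }
  exfalso.
  set (T := setU1 (setD1 A d) c).
  assert (HCT : subset (setD1 C a) T).
  { intros z [hz hza]. destruct (fund_circuit_sub_setU1 A' c C HfC z hz) as [[[hAz _] | ->] | ->];
      [| contradiction | right; reflexivity].
    left. split; [exact hAz |]. intros ->. exact (HCd hz). }
  assert (HCa : C a).
  { apply NNPP; intros HCa. apply (circuit_sub_dep C T (proj1 HfC)); [| exact Hdc].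
    intros z hz. apply HCT. split; [exact hz |]. intros ->. exact (HCa hz). }
  destruct (fund_circuit_exists (setD1 A d) a (indep_sub _ M _ A HA (fun z hz => proj1 hz)) Hda)
    as [C' HfC'].
  assert (HC'T : fund_circuit T a C') by (apply (fund_circuit_mono (setD1 A d));
      [intros z hz; left |]; assumption).
  assert (HC'c : C' c).
  { apply (fund_circuit_unique_sub T a C C' Hdc); [| exact HC'T | exact (proj1 (proj2 HfC))].
    split; [exact (proj1 HfC) | split; assumption]. }
  apply HAc. apply (proj2 (proj2 HfC') c). split; assumption.
Qed.

End Matroid.

Section Families.
Context {E K : Type}.

Definition disjoint_family (I : K -> E -> Prop) : Prop :=
  forall i j x, i <> j -> I i x -> I j x -> False.

Definition update (I : K -> E -> Prop) (k : K) (S : E -> Prop) : K -> E -> Prop :=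
  fun j => if excluded_middle_informative (j = k) then S else I j.

Definition swap (I : K -> E -> Prop) (k : K) (y x : E) : K -> E -> Prop :=
  update I k (setU1 (setD1 (I k) y) x).

Lemma update_same (I : K -> E -> Prop) k S : update I k S k = S.
Proof.
  unfold update. destruct (excluded_middle_informative (k = k)); [reflexivity | contradiction].
Qed.

Lemma update_other (I : K -> E -> Prop) k S j : j <> k -> update I k S j = I j.
Proof.
  intros hjk. unfold update.
  destruct (excluded_middle_informative (j = k)); [contradiction | reflexivity].
Qed.

Lemma update_forall (P : K -> (E -> Prop) -> Prop) (I : K -> E -> Prop) k S :
  P k S -> (forall j, j <> k -> P j (I j)) -> forall j, P j (update I k S j).
Proof.
  intros Hk Hother j.
  destruct (classic (j = k)) as [-> | hjk]; [rewrite update_same | rewrite update_other]; auto.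
Qed.

Lemma updateE (I : K -> E -> Prop) k S j z :
  update I k S j z <-> (j <> k /\ I j z) \/ (j = k /\ S z).
Proof.
  revert j. apply (update_forall (fun j T => T z <-> (j <> k /\ I j z) \/ (j = k /\ S z))).
  - intuition.
  - intros j hjk. intuition.
Qed.

Lemma update_disjoint (I : K -> E -> Prop) k S : disjoint_family I ->
  (forall z, S z -> I k z \/ ~ bigU I z) -> disjoint_family (update I k S).
Proof.
  intros Hdisj HS i j z hij. rewrite !updateE.
  intros [[hik hi] | [-> hS]] [[hjk hj] | [-> hS']]; try contradiction.
  - exact (Hdisj i j z hij hi hj).
  - destruct (HS z hS') as [hk | hnot];
      [exact (Hdisj i k z hik hi hk) | apply hnot; exists i; exact hi].
  - destruct (HS z hS) as [hk | hnot];
      [exact (Hdisj k j z hij hk hj) | apply hnot; exists j; exact hj].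
Qed.

Lemma update_finite_symdiff (I : K -> E -> Prop) k S (l : list E) :
  (forall z, symdiff (I k) S z -> In z l) -> finite_sum_symdiff I (update I k S).
Proof.
  intros Hl. exists (map (pair k) l). intros j z.
  apply (update_forall (fun j T => symdiff (I j) T z -> In (j, z) (map (pair k) l))).
  - intros Hz. exact (in_map _ _ _ (Hl z Hz)).
  - intros j' _ [[h h'] | [h h']]; contradiction.
Qed.

Lemma finite_sum_symdiff_trans (I I' J : K -> E -> Prop) :
  finite_sum_symdiff I I' -> finite_sum_symdiff I' J -> finite_sum_symdiff I J.
Proof.
  intros [l1 Hl1] [l2 Hl2]. exists (l1 ++ l2). intros i z Hz. apply in_or_app.
  destruct (classic (I' i z)); unfold symdiff in *.
  - destruct (classic (I i z)); [right | left]; [apply Hl2 | apply Hl1]; tauto.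
  - destruct (classic (I i z)); [left | right]; [apply Hl1 | apply Hl2]; tauto.
Qed.

Section Swap.
Variables (I : K -> E -> Prop) (k : K) (y x : E).
Hypotheses (Hdisj : disjoint_family I) (Hy : I k y) (Hx : ~ bigU I x).

Lemma swap_same : swap I k y x k = setU1 (setD1 (I k) y) x.
Proof. apply update_same. Qed.

Lemma swap_other j : j <> k -> swap I k y x j = I j.
Proof. apply update_other. Qed.

Lemma swapE j z : swap I k y x j z <-> (j <> k /\ I j z) \/ (j = k /\ ((I k z /\ z <> y) \/ z = x)).
Proof. apply updateE. Qed.

Lemma swap_disjoint : disjoint_family (swap I k y x).
Proof.
  apply update_disjoint; [exact Hdisj |].
  intros z [[hz _] | ->]; [left; exact hz | right; exact Hx].
Qed.

Lemma swap_bigU z : bigU (swap I k y x) z \/ z = y <-> bigU I z \/ z = x.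
Proof.
  split.
  - intros [[j hj] | ->]; [| left; exists k; exact Hy].
    apply swapE in hj. destruct hj as [[_ hj] | [-> [[hj _] | ->]]];
        [left; exists j | left; exists k | right]; auto.
  - intros [[j hj] | ->].
    + destruct (classic (z = y)) as [-> | hzy]; [right; reflexivity |]. left.
      exists j. apply swapE. destruct (classic (j = k)) as [-> | hjk]; auto.
    + left. exists k. apply swapE. auto.
Qed.

Lemma swap_uncovered : ~ bigU (swap I k y x) y.
Proof.
  intros [j hj]. apply swapE in hj.
  destruct hj as [[hjk hj] | [_ [[_ hyy] | ->]]].
  - exact (Hdisj j k y hjk hj Hy).
  - exact (hyy eq_refl).
  - apply Hx. exists k; exact Hy.
Qed.

Lemma swap_finite_symdiff : finite_sum_symdiff I (swap I k y x).
Proof.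
  apply (update_finite_symdiff I k _ (y :: x :: nil)).
  intros z Hz. destruct (classic (z = y)) as [-> | hzy]; [left; reflexivity |].
  destruct (classic (z = x)) as [-> | hzx]; [right; left; reflexivity |].
  exfalso. unfold symdiff, setU1, setD1 in Hz. tauto.
Qed.

End Swap.

End Families.

Section Exchange.
Context {E K : Type} (M : K -> matroid E).

Definition indep_family (I : K -> E -> Prop) : Prop := forall i, indep (M i) (I i).

Lemma swap_indep_family (I : K -> E -> Prop) k y x :
  indep_family I -> indep (M k) (setU1 (setD1 (I k) y) x) ->
  indep_family (swap I k y x).
Proof.
  intros HI Hk j. apply (update_forall (fun j T => indep (M j) T));
      [exact Hk | intros j0 _; exact (HI j0)].
Qed.

Lemma swap_span (I : K -> E -> Prop) k y x :
  (forall w, span (M k) (setU1 (setD1 (I k) y) x) w <-> span (M k) (I k) w) ->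
  forall j w, span (M j) (swap I k y x j) w <-> span (M j) (I j) w.
Proof.
  intros Hk j w. revert j.
  apply (update_forall (fun j T => span (M j) T w <-> span (M j) (I j) w)); [exact (Hk w) | tauto].
Qed.

Definition augmentable (I : K -> E -> Prop) (e : E) : Prop :=
  exists (J : K -> E -> Prop) (k : K),
    indep_family J /\ disjoint_family J /\
    set_eq (bigU J) (setU1 (bigU I) e) /\
    finite_sum_symdiff I J /\
    (forall i, i <> k -> set_eq (span (M i) (J i)) (span (M i) (I i))) /\
    (exists f, J k f /\ set_eq (span (M k) (setD1 (J k) f)) (span (M k) (I k))).

Definition obstructed (I : K -> E -> Prop) (e : E) : Prop :=
  exists X : E -> Prop, subset X (bigU I) /\
    forall i, spans (M i) (fun x => I i x /\ X x) (setU1 X e).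

Definition arc (I : K -> E -> Prop) (i : K) (x y : E) : Prop :=
  ~ indep (M i) (setU1 (I i) x) /\ I i y /\ indep (M i) (setU1 (setD1 (I i) y) x).

Inductive aug_path (I : K -> E -> Prop) : E -> nat -> Prop :=
  | aug_path_free x k : ~ I k x -> indep (M k) (setU1 (I k) x) -> aug_path I x 0
  | aug_path_arc x y i n : arc I i x y -> aug_path I y n -> aug_path I x (S n).

Inductive reachable (I : K -> E -> Prop) (e : E) : E -> Prop :=
  | reachable_refl : reachable I e e
  | reachable_arc x y i : reachable I e x -> arc I i x y -> reachable I e y.

Lemma augmentable_of_free (I : K -> E -> Prop) e k : indep_family I -> disjoint_family I ->
  ~ bigU I e -> indep (M k) (setU1 (I k) e) -> augmentable I e.
Proof.
  intros HI Hdisj He Hind.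
  assert (HIe : forall j, ~ I j e) by (intros j h; apply He; exists j; exact h).
  exists (update I k (setU1 (I k) e)), k.
  split; [| split; [| split; [| split; [| split]]]].
  - intros j. apply (update_forall (fun j T => indep (M j) T));
      [exact Hind | intros j' _; exact (HI j')].
  - apply update_disjoint; [exact Hdisj |]. intros z [hz | ->]; [left; exact hz | right; exact He].
  - intros z. split.
    + intros [j hj]. apply updateE in hj.
      destruct hj as [[_ hj] | [_ [hk | ->]]]; [left; exists j | left; exists k | right]; auto.
    + intros [[j hj] | ->]; [exists j | exists k]; apply updateE;
        [destruct (classic (j = k)) as [-> | hjk] |]; unfold setU1; auto.
  - apply (update_finite_symdiff I k _ (e :: nil)).
    intros z [[hz hnz] | [[hz | ->] hnz]];
        [exfalso; apply hnz; left; exact hz | contradiction | left; reflexivity].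
  - intros j hjk w. rewrite (update_other I k _ j hjk). reflexivity.
  - exists e. rewrite update_same. split; [right; reflexivity |].
    intros w. split; apply span_mono.
    + intros z [[hz | ->] hze]; [exact hz | contradiction].
    + intros z hz. split; [left; exact hz |]. intros ->. exact (HIe k hz).
Qed.

Lemma augmentable_transfer (I I' : K -> E -> Prop) e e' :
  (forall j w, span (M j) (I' j) w <-> span (M j) (I j) w) ->
  (forall z, bigU I' z \/ z = e' <-> bigU I z \/ z = e) ->
  finite_sum_symdiff I I' -> augmentable I' e' -> augmentable I e.
Proof.
  intros Hspan HU Hfin [J [k [HJ [HJdisj [HJU [HJfin [HJspan [f [Hf HJf]]]]]]]]].
  exists J, k. split; [exact HJ | split; [exact HJdisj | split; [| split; [| split]]]].
  - intros z. exact (iff_trans (HJU z) (HU z)).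
  - exact (finite_sum_symdiff_trans I I' J Hfin HJfin).
  - intros i hik w. exact (iff_trans (HJspan i hik w) (Hspan i w)).
  - exists f. split; [exact Hf |]. intros w. exact (iff_trans (HJf w) (Hspan k w)).
Qed.

Section ShortestPath.
Variables (I : K -> E -> Prop) (e x1 : E) (i0 : K) (m : nat).
Hypotheses (HI : indep_family I) (He : ~ bigU I e) (Harc : arc I i0 e x1)
  (Hshortest : forall n, aug_path I e n -> S m <= n).

Lemma shortest_swap_span j w : span (M j) (swap I i0 x1 e j) w <-> span (M j) (I j) w.
Proof.
  destruct Harc as [Hdep [Hx1 Hind]]. apply swap_span.
  exact (span_swap (M i0) (I i0) e x1 (HI i0) Hdep Hx1 Hind).
Qed.

Lemma augmentable_of_shortest_swap : augmentable (swap I i0 x1 e) x1 -> augmentable I e.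
Proof.
  apply augmentable_transfer; [exact shortest_swap_span | | exact (swap_finite_symdiff I i0 x1 e)].
  exact (swap_bigU I i0 x1 e (proj1 (proj2 Harc))).
Qed.

Lemma shortest_swap_aug_path r x : aug_path I x r -> r <= m -> x <> e ->
  aug_path (swap I i0 x1 e) x r.
Proof.
  set (I' := swap I i0 x1 e).
  pose proof Harc as [Hedep [Hx1 Hx1e]].
  assert (HI'0 : I' i0 = setU1 (setD1 (I i0) x1) e) by apply swap_same.
  assert (HI' : indep_family I') by exact (swap_indep_family I i0 x1 e HI Hx1e).
  assert (Hfresh : forall j z, ~ I j z -> z <> e -> ~ I' j z).
  { intros j z hz hze hz'. apply swapE in hz'.
    destruct hz' as [[_ h] | [-> [[h _] | h]]]; contradiction. }
  assert (Hindeq : forall j z, ~ I j z -> z <> e ->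
    (indep (M j) (setU1 (I' j) z) <-> indep (M j) (setU1 (I j) z))).
  { intros j z hz hze. rewrite (indep_setU1E _ _ z (HI' j) (Hfresh j z hz hze)),
      (indep_setU1E _ _ z (HI j) hz).
    pose proof (shortest_swap_span j z). tauto. }
  induction 1 as [x k Hk Hind | x y i n [Hxdep [Hy Hyx]] Hpath IH]; intros Hr Hxe.
  - exact (aug_path_free I' x k (Hfresh k x Hk Hxe) (proj2 (Hindeq k x Hk Hxe) Hind)).
  - assert (Hye : y <> e) by (intros ->; apply He; exists i; exact Hy).
    apply (aug_path_arc I' x y i n); [| apply IH; [lia | exact Hye]].
    assert (HIx : ~ I i x) by exact (setU1_dep_notin (M i) (I i) x (HI i) Hxdep).
    split; [rewrite (Hindeq i x HIx Hxe); exact Hxdep |].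
    destruct (classic (i = i0)) as [-> | hi];
        [| unfold I'; rewrite (swap_other I i0 x1 e i hi); split; assumption].
    (* an arc e -> y would give an augmenting path from e shorter than the shortest one *)
    assert (Hey : ~ indep (M i0) (setU1 (setD1 (I i0) y) e)).
    { intros Hind.
      specialize (Hshortest _ (aug_path_arc I e y i0 n (conj Hedep (conj Hy Hind)) Hpath)). lia. }
    rewrite HI'0. split.
    + left. split; [exact Hy |]. intros ->. exact (Hey Hx1e).
    + exact (double_exchange_indep (M i0) (I i0) e x1 x y
        (HI i0) Hedep Hx1 Hx1e Hxe Hxdep Hy Hyx Hey).
Qed.

End ShortestPath.

Lemma augmentable_of_aug_path n : forall (I : K -> E -> Prop) e,
  indep_family I -> disjoint_family I ->
  ~ bigU I e -> aug_path I e n -> augmentable I e.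
Proof.
  induction n as [n IH] using lt_wf_ind. intros I e HI Hdisj He Hn.
  destruct (dec_inh_nat_subset_has_unique_least_element (aug_path I e) (fun m => classic _)
    (ex_intro _ n Hn)) as [m [[Hm Hshortest] _]].
  inversion Hm as [e' k Hk Hind | e' x1 i0 m' Harc Hpath]; subst.
  - exact (augmentable_of_free I e k HI Hdisj He Hind).
  - pose proof Harc as [_ [Hx1 Hx1e]].
    assert (Hx1e' : x1 <> e) by (intros ->; apply He; exists i0; exact Hx1).
    apply (augmentable_of_shortest_swap I e x1 i0 HI Harc).
    apply (IH m'); [specialize (Hshortest n Hn); lia | exact (swap_indep_family I i0 x1 e HI Hx1e)
      | exact (swap_disjoint I i0 x1 e Hdisj He) | exact (swap_uncovered I i0 x1 e Hdisj Hx1 He) |].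
    exact (shortest_swap_aug_path I e x1 i0 m' HI He Harc Hshortest m' x1 Hpath (le_n m') Hx1e').
Qed.

Lemma aug_path_of_reachable (I : K -> E -> Prop) e x : reachable I e x ->
  forall n, aug_path I x n -> exists n', aug_path I e n'.
Proof.
  induction 1 as [| x y i Hr IH Harc]; intros n Hn; [exists n; exact Hn |].
  exact (IH (S n) (aug_path_arc I x y i n Harc Hn)).
Qed.

Lemma obstructed_of_no_aug_path (I : K -> E -> Prop) e : indep_family I ->
  ~ (exists n, aug_path I e n) -> obstructed I e.
Proof.
  intros HI Hno. exists (fun x => bigU I x /\ reachable I e x). split; [intros x [h _]; exact h |].
  intros i w Hw.
  assert (Hr : reachable I e w) by (destruct Hw as [[_ h] | ->]; [exact h | apply reachable_refl]).
  destruct (classic (I i w)) as [HIw | HIw]; [left; split; [| split; [exists i |]]; assumption |].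
  assert (Hdep : ~ indep (M i) (setU1 (I i) w)).
  { intros Hind. exact (Hno (aug_path_of_reachable I e w Hr 0 (aug_path_free I w i HIw Hind))). }
  destruct (fund_circuit_exists (M i) (I i) w (HI i) Hdep) as [C HfC].
  right. exists C. split; [exact (proj1 HfC) | split; [exact (proj1 (proj2 HfC)) |]].
  intros c [hc hcw].
  assert (HIc : I i c) by exact (proj2 (proj2 HfC) c (conj hc hcw)).
  split; [exact HIc | split; [exists i; exact HIc |]].
  apply (reachable_arc I e w c i Hr).
  exact (conj Hdep (conj HIc (circuit_exchange (M i) (I i) C w c (HI i) HfC hc hcw))).
Qed.

Lemma cover_of_finite_defect (J : K -> E -> Prop) (Y : E -> Prop) :
  indep_family J -> subset Y (bigU J) ->
  forall (l : list (K * E)) (B : K -> E -> Prop), indep_family B -> disjoint_family B ->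
  (forall i, subset (B i) Y) -> (forall i, spans (M i) (B i) Y) ->
  (forall i x, J i x -> Y x -> ~ B i x -> In (i, x) l) -> subset Y (bigU B).
Proof.
  intros HJ HYJ l. induction l as [l IH] using (induction_ltof1 _ (@length _)).
  intros B HB Hdisj HBY HspanY Hl f Hf. apply NNPP; intros HBf.
  destruct (HYJ f Hf) as [a Ha].
  assert (HBaf : ~ B a f) by (intros h; apply HBf; exists a; exact h).
  assert (Hin : In (a, f) l) by exact (Hl a f Ha Hf HBaf).
  assert (Hdep : ~ indep (M a) (setU1 (B a) f)).
  { rewrite (indep_setU1E (M a) (B a) f (HB a) HBaf). intros Hn. exact (Hn (HspanY a f Hf)). }
  destruct (fund_circuit_exists (M a) (B a) f (HB a) Hdep) as [C HfC].
  destruct (classic (exists y, C y /\ ~ J a y)) as [[y [HCy HJy]] | Hall].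
  2: { apply (circuit_sub_dep (M a) C (J a) (proj1 HfC)); [| exact (HJ a)].
       intros z hz. apply NNPP; intros h. apply Hall. exists z. split; assumption. }
  assert (Hyf : y <> f) by (intros ->; exact (HJy Ha)).
  assert (HBy : B a y) by exact (proj2 (proj2 HfC) y (conj HCy Hyf)).
  (* exchanging y for f in B a removes the defect (a, f) while keeping the invariants *)
  apply (swap_uncovered B a y f Hdisj HBy HBf).
  apply (IH (remove (fun p q => excluded_middle_informative (p = q)) (a, f) l)
    (remove_length_lt _ l (a, f) Hin)).
  - exact (swap_indep_family B a y f HB (circuit_exchange (M a) (B a) C f y (HB a) HfC HCy Hyf)).
  - exact (swap_disjoint B a y f Hdisj HBf).
  - intros i z hz. apply swapE in hz.
    destruct hz as [[_ hz] | [-> [[hz _] | ->]]];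
        [exact (HBY i z hz) | exact (HBY a z hz) | exact Hf].
  - intros i w hw. apply (swap_span B a y f (span_exchange (M a) (B a) C f y (HB a) HfC HCy Hyf)).
    exact (HspanY i w hw).
  - intros i x HJx HYx HB'x. apply in_in_remove.
    + intros Heq. injection Heq as -> ->. apply HB'x, swapE. right.
        split; [reflexivity | right; reflexivity].
    + apply Hl; [exact HJx | exact HYx |]. intros HBx. apply HB'x, swapE.
      destruct (classic (i = a)) as [-> | hia]; [right; split;
          [reflexivity |] | left; split; assumption].
      left. split; [exact HBx |]. intros ->. exact (HJy HJx).
  - exact (HBY a y HBy).
Qed.

Lemma not_augmentable_and_obstructed (I : K -> E -> Prop) e : indep_family I -> disjoint_family I ->
  ~ bigU I e -> augmentable I e -> obstructed I e -> False.
Proof.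
  intros HI Hdisj He [J [k [HJ [_ [HJU [[l Hl] _]]]]]] [X [HXI HXspan]].
  apply He.
  assert (Hcover : subset (setU1 X e) (bigU (fun i x => I i x /\ X x))).
  { apply (cover_of_finite_defect J (setU1 X e) HJ) with (l := l).
    - intros z hz. apply HJU. destruct hz as [h | ->]; [left; exact (HXI z h) | right; reflexivity].
    - intros i. apply (indep_sub _ (M i) _ (I i) (HI i)). intros z [h _]; exact h.
    - intros i j z hij [hi _] [hj _]. exact (Hdisj i j z hij hi hj).
    - intros i z [_ h]. left; exact h.
    - exact HXspan.
    - intros i x HJx HYx HBx. apply Hl. right. split; [exact HJx |]. intros HIx. apply HBx.
      split; [exact HIx |]. destruct HYx as [h | ->];
          [exact h | exfalso; apply He; exists i; exact HIx]. }
  destruct (Hcover e (or_intror eq_refl)) as [i [HIe _]]. exists i; exact HIe.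
Qed.

End Exchange.

Theorem lemma3p1 (E K : Type) (M : K -> matroid E) (I : K -> E -> Prop) (e : E)
  (hI : forall i, indep (M i) (I i))
  (hdisj : forall i j x, i <> j -> I i x -> I j x -> False)
  (he : ~ bigU I e) :
  let P1 :=
    exists (J : K -> E -> Prop) (k : K),
      (forall i, indep (M i) (J i)) /\
      (forall i j x, i <> j -> J i x -> J j x -> False) /\
      set_eq (bigU J) (setU1 (bigU I) e) /\
      finite_sum_symdiff I J /\
      (forall i, i <> k -> set_eq (span (M i) (J i)) (span (M i) (I i))) /\
      (exists f, J k f /\ set_eq (span (M k) (setD1 (J k) f)) (span (M k) (I k))) in
  let P2 :=
    exists X : E -> Prop, subset X (bigU I) /\
      forall i, spans (M i) (fun x => I i x /\ X x) (setU1 X e) in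
  (P1 \/ P2) /\ ~ (P1 /\ P2).
Proof.
  intros P1 P2. split.
  - destruct (classic (exists n, aug_path M I e n)) as [[n Hn] | Hno].
    + left. exact (augmentable_of_aug_path M n I e hI hdisj he Hn).
    + right. exact (obstructed_of_no_aug_path M I e hI Hno).
  - intros [H1 H2]. exact (not_augmentable_and_obstructed M I e hI hdisj he H1 H2).
Qed.
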